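(* Let $A$ be a partial ring. For every $a\in A$, the subset $D(a)$ of $X_A$ is quasi-compact. In particular $X_A$ is quasi-compact.
   Context: A partial ring is a set $A$ with $0$, a set $A_2\subseteq A\times A$ of summable pairs and a partial addition $+\colon A_2\to A$ (with $0$ a unit summable with everything, commutative, and associative in the sense: $(a,b),(a+b,c)\in A_2$ iff $(b,c),(a,b+c)\in A_2$, and then $(a+b)+c=a+(b+c)$), together with a commutative associative multiplication with unit $1$ such that $0\cdot a=0$ and $(a_1,a_2)\in A_2\Rightarrow(a_1x,a_2x)\in A_2$, $(a_1+a_2)x=a_1x+a_2x$. An ideal is a subset $I\ni 0$ closed under sums of pairs in $A_2\cap(I\times I)$ and with $AI\subseteq I$; a prime ideal is an ideal $I\neq A$ with $ab\in I\Rightarrow a\in I$ or $b\in I$. $X_A$ is the set of prime ideals of $A$; for $a\in A$, $D(a)=\{\mathfrak{p}\in X_A: a\notin\mathfrak{p}\}$; $X_A$ carries the topology generated by the sets $D(a)$, $a\in A$. *)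

From Stdlib Require Import List.

(* The partial addition is encoded as a total function
   [padd] together with the set [summable] = A_2 of summable pairs; the value
   of [padd a b] for non-summable pairs is irrelevant (no axiom constrains it,
   and every notion below only uses sums of summable pairs). *)
Record PartialRing := {
  carrier :> Type;
  pzero : carrier;
  pone : carrier;
  summable : carrier -> carrier -> Prop;
  padd : carrier -> carrier -> carrier;
  pmul : carrier -> carrier -> carrier;
  summable_0 : forall a, summable a pzero;
  padd_0 : forall a, padd a pzero = a;
  summable_comm : forall a b, summable a b -> summable b a;
  padd_comm : forall a b, summable a b -> padd a b = padd b a;
  summable_assoc : forall a b c,
    (summable a b /\ summable (padd a b) c) <->
    (summable b c /\ summable a (padd b c));
  padd_assoc : forall a b c, summable a b -> summable (padd a b) c ->
    padd (padd a b) c = padd a (padd b c);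
  pmul_comm : forall a b, pmul a b = pmul b a;
  pmul_assoc : forall a b c, pmul (pmul a b) c = pmul a (pmul b c);
  pmul_1 : forall a, pmul pone a = a;
  pmul_0 : forall a, pmul pzero a = pzero;
  summable_mul : forall a1 a2 x, summable a1 a2 ->
    summable (pmul a1 x) (pmul a2 x);
  pmul_addl : forall a1 a2 x, summable a1 a2 ->
    pmul (padd a1 a2) x = padd (pmul a1 x) (pmul a2 x)
}.

Section Spec.
Variable A : PartialRing.

Definition is_ideal (I : A -> Prop) : Prop :=
  I (pzero A) /\
  (forall a b, summable A a b -> I a -> I b -> I (padd A a b)) /\
  (forall a x, I x -> I (pmul A a x)).

Definition is_prime (I : A -> Prop) : Prop :=
  is_ideal I /\ (exists a, ~ I a) /\
  (forall a b, I (pmul A a b) -> I a \/ I b).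

Definition XA : Type := { p : A -> Prop | is_prime p }.

Definition D (a : A) : XA -> Prop := fun p => ~ proj1_sig p a.

Inductive Zopen : (XA -> Prop) -> Prop :=
| Zopen_D : forall a, Zopen (D a)
| Zopen_full : Zopen (fun _ => True)
| Zopen_inter : forall U V, Zopen U -> Zopen V -> Zopen (fun x => U x /\ V x)
| Zopen_union : forall F : (XA -> Prop) -> Prop,
    (forall U, F U -> Zopen U) -> Zopen (fun x => exists U, F U /\ U x)
| Zopen_ext : forall U V, Zopen U -> (forall x, U x <-> V x) -> Zopen V.

Definition quasi_compact (K : XA -> Prop) : Prop :=
  forall C : (XA -> Prop) -> Prop,
    (forall U, C U -> Zopen U) ->
    (forall x, K x -> exists U, C U /\ U x) ->
    exists l : list (XA -> Prop),
      (forall U, In U l -> C U) /\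
      (forall x, K x -> exists U, In U l /\ U x).

End Spec.

(* The sets [D b] form a basis of the topology, since [D (b c) = D b ∩ D c] and
   [D 1] is the whole space, so it suffices to refine a cover of [D a] by basic
   sets [D b], b ∈ B.  If no power of [a] lay in the ideal generated by [B],
   Zorn's lemma would give an ideal [M] maximal among those containing [B] and
   avoiding the powers of [a].  Such an [M] is prime (compare it with colon
   ideals [(M : y)]; sums [M + (x)] need not exist in a partial ring), and as a
   point of [D a] outside every [D b] it contradicts the cover.  So some [a ^ n]
   is a combination of finitely many [b_1, ..., b_k] of [B], and a prime outside
   every [D b_i] contains [a ^ n], hence [a]. *)
From mathcomp Require Import boolp classical_sets.
From Stdlib Require Import List Classical.

Lemma Zorn_nonempty_chains (T : Type) (P : (T -> Prop) -> Prop) (J0 : T -> Prop) :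
  P J0 ->
  (forall F : (T -> Prop) -> Prop, (exists J, F J) -> (forall J, F J -> P J) ->
     (forall J K, F J -> F K -> (forall x, J x -> K x) \/ (forall x, K x -> J x)) ->
     P (fun x => exists J, F J /\ J x)) ->
  exists M, P M /\ forall N, P N -> (forall x, M x -> N x) -> forall x, N x -> M x.
Proof.
  intros HJ0 Hchain.
  pose (R := fun J K : {J | P J} =>
         asbool (forall x, proj1_sig J x -> proj1_sig K x)).
  destruct (@ZL_preorder {J | P J} (exist _ J0 HJ0) R) as [[M HM] Mmax].
  - intros J; apply asboolT; trivial.
  - intros J K L HJK HKL; apply asboolT; intros x Jx.
    exact (asboolW HKL x (asboolW HJK x Jx)).
  - intros Ch Htot.
    pose (F := fun J => exists H : P J, Ch (exist _ J H)).
    destruct (classic (exists J, Ch J)) as [[[J HJ] ChJ] | Hempty].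
    + assert (HF : P (fun x => exists J, F J /\ J x)).
      { apply Hchain.
        - exists J, HJ; exact ChJ.
        - intros K [HK _]; exact HK.
        - intros K L [HK ChK] [HL ChL].
          destruct (Htot _ _ ChK ChL); [left | right]; apply asboolW; assumption. }
      exists (exist _ _ HF); intros [K HK] ChK; apply asboolT; simpl.
      intros x Kx; exists K; split; [exists HK |]; trivial.
    + exists (exist _ J0 HJ0); intros K ChK.
      exfalso; apply Hempty; exists K; exact ChK.
  - exists M; split; [exact HM |].
    intros N HN MN; apply (asboolW (Mmax (exist _ N HN) (asboolT MN))).
Qed.

Lemma list_choice {X Y : Type} {R : X -> Y -> Prop} (l : list X) :
  (forall x, In x l -> exists y, R x y) ->
  exists l' : list Y, (forall y, In y l' -> exists x, R x y) /\
    (forall x, In x l -> exists y, In y l' /\ R x y).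
Proof.
  induction l as [| x l IH]; intros Hl.
  - exists nil; split; intros _ [].
  - destruct IH as [l' [Hl'1 Hl'2]]; [intros x' Hx'; apply Hl; right; exact Hx' |].
    destruct (Hl x (or_introl eq_refl)) as [y Rxy].
    exists (y :: l'); split.
    + intros y' [<- | Hy']; [exists x; exact Rxy | exact (Hl'1 y' Hy')].
    + intros x' [<- | Hx'].
      * exists y; split; [left |]; trivial.
      * destruct (Hl'2 x' Hx') as [y' [Hy' Rxy']].
        exists y'; split; [right |]; trivial.
Qed.

Section PartialRingSpectrum.

Variable A : PartialRing.

Fixpoint ppow (a : A) (n : nat) : A :=
  match n with
  | 0 => pone A
  | S n => pmul A a (ppow a n)
  end.

Lemma ppow_add (a : A) (m n : nat) :
  pmul A (ppow a m) (ppow a n) = ppow a (m + n).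
Proof.
  induction m as [| m IH]; simpl.
  - apply pmul_1.
  - rewrite pmul_assoc, IH; reflexivity.
Qed.

Lemma ideal_mulr {I : A -> Prop} {x : A} (y : A) :
  is_ideal A I -> I x -> I (pmul A x y).
Proof. intros [_ [_ HI]] Hx; rewrite pmul_comm; exact (HI y x Hx). Qed.

Lemma ideal_colon {I : A -> Prop} (y : A) :
  is_ideal A I -> is_ideal A (fun z => I (pmul A z y)).
Proof.
  intros [HI0 [HIadd HImul]]; split; [| split].
  - rewrite pmul_0; exact HI0.
  - intros a b Hab Ha Hb; rewrite pmul_addl by exact Hab.
    apply HIadd; [apply summable_mul, Hab | exact Ha | exact Hb].
  - intros a x Hx; rewrite pmul_assoc; apply HImul; exact Hx.
Qed.

Lemma prime_not_one {P : A -> Prop} : is_prime A P -> ~ P (pone A).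
Proof.
  intros [HP [[a Ha] _]] H1; apply Ha.
  rewrite <- (pmul_1 A a); exact (ideal_mulr a HP H1).
Qed.

Lemma prime_mul {P : A -> Prop} (b c : A) :
  is_prime A P -> P (pmul A b c) <-> P b \/ P c.
Proof.
  intros [HP [_ Hmul]]; split; [apply Hmul |].
  intros [Hb | Hc]; [| rewrite pmul_comm]; apply ideal_mulr; trivial.
Qed.

Lemma prime_ppow {P : A -> Prop} {a : A} (n : nat) :
  is_prime A P -> P (ppow a n) -> P a.
Proof.
  intros HP; induction n as [| n IH]; simpl; intros Hn.
  - destruct (prime_not_one HP Hn).
  - destruct (proj1 (prime_mul a (ppow a n) HP) Hn); auto.
Qed.

Lemma D_one (p : XA A) : D A (pone A) p.
Proof. destruct p as [P HP]; exact (prime_not_one HP). Qed.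

Lemma D_mul (b c : A) (p : XA A) : D A (pmul A b c) p <-> D A b p /\ D A c p.
Proof.
  destruct p as [P HP]; unfold D; simpl.
  rewrite (prime_mul b c HP); tauto.
Qed.

Lemma Zopen_D_basis {U : XA A -> Prop} {p : XA A} :
  Zopen A U -> U p -> exists b, D A b p /\ forall q, D A b q -> U q.
Proof.
  intros HU; revert p; induction HU as [a | | U V _ IHU _ IHV | F _ IHF | U V _ IHU HUV].
  - intros p Hp; exists a; auto.
  - intros p _; exists (pone A); split; [apply D_one | auto].
  - intros p [Up Vp].
    destruct (IHU p Up) as [b [Hb HbU]], (IHV p Vp) as [c [Hc HcV]].
    exists (pmul A b c); split; [apply D_mul; auto |].
    intros q Hq; apply D_mul in Hq; destruct Hq; auto.
  - intros p [U [FU Up]]; destruct (IHF U FU p Up) as [b [Hb HbU]].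
    exists b; split; [exact Hb |]; intros q Hq; exists U; auto.
  - intros p Vp; destruct (IHU p (proj2 (HUV p) Vp)) as [b [Hb HbU]].
    exists b; split; [exact Hb |]; intros q Hq; apply HUV; auto.
Qed.

Inductive span (B : A -> Prop) : A -> Prop :=
| span_base : forall b, B b -> span B b
| span_zero : span B (pzero A)
| span_add : forall x y, summable A x y -> span B x -> span B y -> span B (padd A x y)
| span_mul : forall c x, span B x -> span B (pmul A c x).

Lemma span_ideal (B : A -> Prop) : is_ideal A (span B).
Proof.
  split; [| split].
  - apply span_zero.
  - intros; apply span_add; trivial.
  - intros; apply span_mul; trivial.
Qed.

Lemma span_min {B I : A -> Prop} {z : A} :
  is_ideal A I -> (forall b, B b -> I b) -> span B z -> I z.
Proof.
  intros [HI0 [HIadd HImul]] HBI Hz; induction Hz; auto.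
Qed.

Lemma span_mono {B B' : A -> Prop} {z : A} :
  (forall b, B b -> B' b) -> span B z -> span B' z.
Proof.
  intros HBB'; apply span_min; [apply span_ideal |].
  intros b Hb; apply span_base; auto.
Qed.

Lemma span_finite {B : A -> Prop} {z : A} :
  span B z -> exists l, (forall b, In b l -> B b) /\ span (fun b => In b l) z.
Proof.
  induction 1 as [b Hb | | x y Hxy _ [l1 [Hl1 Hx]] _ [l2 [Hl2 Hy]] | c x _ [l [Hl Hx]]].
  - exists (b :: nil); split.
    + intros b' [<- | []]; exact Hb.
    + apply span_base; left; reflexivity.
  - exists nil; split; [intros _ [] | apply span_zero].
  - exists (l1 ++ l2); split.
    + intros b Hb; apply in_app_or in Hb; destruct Hb; auto.
    + apply span_add; [exact Hxy | |];
        (eapply span_mono; [| eassumption]); intros; apply in_or_app; auto.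
  - exists l; split; [exact Hl | apply span_mul; exact Hx].
Qed.

Definition avoids_powers (a : A) (J : A -> Prop) : Prop :=
  forall n, ~ J (ppow a n).

Definition avoiding_ideal_above (a : A) (I J : A -> Prop) : Prop :=
  is_ideal A J /\ (forall x, I x -> J x) /\ avoids_powers a J.

Lemma avoiding_ideal_chain_union (a : A) (I : A -> Prop)
    (F : (A -> Prop) -> Prop) :
  (exists J, F J) -> (forall J, F J -> avoiding_ideal_above a I J) ->
  (forall J K, F J -> F K -> (forall x, J x -> K x) \/ (forall x, K x -> J x)) ->
  avoiding_ideal_above a I (fun x => exists J, F J /\ J x).
Proof.
  intros [J0 FJ0] HF Htot.
  split; [split; [| split] | split].
  - exists J0; split; [exact FJ0 |].
    destruct (HF J0 FJ0) as [[HJ0 _] _]; exact HJ0.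
  - intros x y Hxy [J [FJ Jx]] [K [FK Ky]].
    destruct (Htot J K FJ FK) as [HJK | HKJ].
    + exists K; split; [exact FK |].
      destruct (HF K FK) as [[_ [HKadd _]] _]; auto.
    + exists J; split; [exact FJ |].
      destruct (HF J FJ) as [[_ [HJadd _]] _]; auto.
  - intros c x [J [FJ Jx]]; exists J; split; [exact FJ |].
    destruct (HF J FJ) as [[_ [_ HJmul]] _]; auto.
  - intros x Ix; exists J0; split; [exact FJ0 |].
    destruct (HF J0 FJ0) as [_ [HIJ0 _]]; auto.
  - intros n [J [FJ Jn]]; destruct (HF J FJ) as [_ [_ HJa]]; exact (HJa n Jn).
Qed.

Section MaximalAvoidingIdeal.

Variables (a : A) (M : A -> Prop).
Hypotheses (HM : is_ideal A M) (HMa : avoids_powers a M)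
  (HMmax : forall N, is_ideal A N -> (forall x, M x -> N x) ->
             avoids_powers a N -> forall x, N x -> M x).

Lemma maximal_colon (y : A) {z : A} :
  avoids_powers a (fun x => M (pmul A x y)) -> M (pmul A z y) -> M z.
Proof.
  intros Hy Hz; apply (HMmax _ (ideal_colon y HM)); [| exact Hy | exact Hz].
  intros x Mx; exact (ideal_mulr y HM Mx).
Qed.

(* Let [x y ∈ M].  If some [a ^ n x ∈ M] then [x ∈ (M : a ^ n)], otherwise
   [y ∈ (M : x)]; in both cases the colon ideal avoids the powers of [a], so by
   maximality it is contained in [M]. *)
Lemma maximal_avoiding_prime : is_prime A M.
Proof.
  split; [exact HM | split; [exists (pone A); exact (HMa 0) |]].
  intros x y Hxy; apply NNPP; intros Hnot; apply not_or_and in Hnot.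
  destruct Hnot as [Hx Hy].
  destruct (classic (exists n, M (pmul A (ppow a n) x))) as [[n Hn] | Hno].
  - apply Hx; apply (maximal_colon (ppow a n)).
    + intros m Hm; rewrite ppow_add in Hm; exact (HMa _ Hm).
    + rewrite pmul_comm; exact Hn.
  - apply Hy; apply (maximal_colon x).
    + intros m Hm; apply Hno; exists m; exact Hm.
    + rewrite pmul_comm; exact Hxy.
Qed.

End MaximalAvoidingIdeal.

Lemma exists_prime_avoiding (a : A) (I : A -> Prop) :
  is_ideal A I -> avoids_powers a I ->
  exists P, is_prime A P /\ (forall x, I x -> P x) /\ ~ P a.
Proof.
  intros HI HIa.
  destruct (@Zorn_nonempty_chains A (avoiding_ideal_above a I) I)
    as [M [[HM [HIM HMa]] HMmax]].
  - split; [exact HI | split; [auto | exact HIa]].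
  - apply avoiding_ideal_chain_union.
  - assert (HP : is_prime A M).
    { apply (maximal_avoiding_prime a M HM HMa).
      intros N HN HMN HNa; apply HMmax; [split; [| split] |]; auto. }
    exists M; split; [exact HP | split; [exact HIM |]].
    intros Ma; apply (HMa 1); simpl.
    exact (ideal_mulr _ HM Ma).
Qed.

Lemma D_cover_ppow_span {a : A} {B : A -> Prop} :
  (forall p, D A a p -> exists b, B b /\ D A b p) ->
  exists n, span B (ppow a n).
Proof.
  intros Hcov; apply NNPP; intros Hnone.
  destruct (@exists_prime_avoiding a (span B)) as [P [HP [HBP HPa]]].
  - apply span_ideal.
  - intros n Hn; apply Hnone; exists n; exact Hn.
  - destruct (Hcov (exist _ P HP) HPa) as [b [Hb Db]].
    apply Db; apply HBP; apply span_base; exact Hb.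
Qed.

Lemma D_cover_finite {a : A} {B : A -> Prop} :
  (forall p, D A a p -> exists b, B b /\ D A b p) ->
  exists l, (forall b, In b l -> B b) /\
    forall p, D A a p -> exists b, In b l /\ D A b p.
Proof.
  intros Hcov; destruct (D_cover_ppow_span Hcov) as [n Hn].
  destruct (span_finite Hn) as [l [HlB Hln]].
  exists l; split; [exact HlB |].
  intros [P HP] HPa; apply NNPP; intros Hnone; apply HPa.
  apply (prime_ppow n HP), (span_min (proj1 HP) (B := fun b => In b l));
    [| exact Hln].
  intros b Hb; apply NNPP; intros Pb; apply Hnone; exists b; split; trivial.
Qed.

Lemma D_quasi_compact (a : A) : quasi_compact A (D A a).
Proof.
  intros C HC Hcov.
  pose (B := fun b => exists U, C U /\ forall q, D A b q -> U q).
  destruct (@D_cover_finite a B) as [l [HlB Hl]].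
  - intros p Hp; destruct (Hcov p Hp) as [U [CU Up]].
    destruct (Zopen_D_basis (HC U CU) Up) as [b [Hb HbU]].
    exists b; split; [exists U; auto | exact Hb].
  - destruct (list_choice l HlB) as [lU [HlU HlUl]].
    exists lU; split.
    + intros U HU; destruct (HlU U HU) as [b [CU _]]; exact CU.
    + intros p Hp; destruct (Hl p Hp) as [b [Hb Db]].
      destruct (HlUl b Hb) as [U [HU [_ HbU]]].
      exists U; auto.
Qed.

Lemma quasi_compact_ext {K K' : XA A -> Prop} :
  (forall p, K p <-> K' p) -> quasi_compact A K -> quasi_compact A K'.
Proof.
  intros HKK' HK C HC Hcov.
  destruct (HK C HC) as [l [HlC Hl]].
  - intros p Kp; apply Hcov, HKK', Kp.
  - exists l; split; [exact HlC | intros p K'p; apply Hl, HKK', K'p].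
Qed.

End PartialRingSpectrum.

Theorem mainTheorem10 (A : PartialRing) :
  (forall a : A, quasi_compact A (D A a)) /\ quasi_compact A (fun _ => True).
Proof.
  split; [exact (D_quasi_compact A) |].
  apply (@quasi_compact_ext A (D A (pone A))); [| apply D_quasi_compact].
  intros p; split; [trivial | intros _; apply D_one].
Qed.
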